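(* Let $n\ge2$, $\alpha,\beta>0$, $a=1/\alpha$, $b=1/\beta$, and let $1\le j_1<\dots<j_r\le n-1$. For $1\le j\le n-1$ let $x_j$ be the event that box $(n-j,j)$ (on the second main diagonal) is non-empty. If $j_k\le j_{k+1}-2$ for all $k=1,\dots,r-1$, then \[\mathbb{P}_{n,\alpha,\beta}(x_{j_1},\dots,x_{j_r})=\prod_{k=1}^{r}\frac{1}{n+a+b-r+k-1}.\] Otherwise, $\mathbb{P}_{n,\alpha,\beta}(x_{j_1},\dots,x_{j_r})=0$.
   Context: A staircase tableau of size $n$ has boxes $(i,j)$ with $i,j\ge1$ and $i+j\le n+1$, rows numbered from the top and columns from the left. An $\alpha/\beta$-staircase tableau of size $n$ is a filling in which each box is empty or contains $\alpha$ or $\beta$, such that: all boxes in the same column and above an $\alpha$ are empty; all boxes in the same row and to the left of a $\beta$ are empty; every main-diagonal box (with $i+j=n+1$) contains a symbol. $\overline{\mathcal{S}}_n$ is the set of these. The weight is $wt(S)=\alpha^{N_\alpha}\beta^{N_\beta}$ ($N_\alpha,N_\beta$ the numbers of $\alpha$'s, $\beta$'s), and $\mathbb{P}_{n,\alpha,\beta}(S)=wt(S)/\sum_{T\in\overline{\mathcal{S}}_n}wt(T)$. $\mathbb{P}_{n,\alpha,\beta}(E_1,\dots,E_r)$ denotes the probability of the intersection of the events. *)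

From mathcomp Require Import all_boot all_order all_algebra.
Set Implicit Arguments. Unset Strict Implicit. Unset Printing Implicit Defensive.
Import Order.TTheory GRing.Theory Num.Theory.

(* Boxes are indexed 0-based: p = (i', j') : 'I_n * 'I_n stands for the box
   (i'+1, j'+1) (row, column).  A box of the staircase of size n satisfies
   (i'+1)+(j'+1) <= n+1, i.e. i'+j' < n; the main diagonal is i'+j' = n-1. *)
Definition box n := ('I_n * 'I_n)%type.

(* Cell content: None = empty, Some true = alpha, Some false = beta. *)
Definition filling n := {ffun box n -> option bool}.

Definition in_stair n (p : box n) : bool := (p.1 + p.2 < n)%N.

Definition is_ab_stair n (S : filling n) : bool :=
  [&& [forall p : box n, ~~ in_stair p ==> (S p == None)],
      [forall p : box n, (S p == Some true) ==>
          [forall q : box n, ((q.2 == p.2) && (q.1 < p.1)%N) ==> (S q == None)]],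
      [forall p : box n, (S p == Some false) ==>
          [forall q : box n, ((q.1 == p.1) && (q.2 < p.2)%N) ==> (S q == None)]]
    &
      [forall p : box n, (p.1 + p.2 == n.-1)%N ==> (S p != None)]].

Definition stairs n : {set filling n} := [set S | is_ab_stair S].

Definition N_alpha n (S : filling n) : nat := #|[set p | S p == Some true]|.
Definition N_beta n (S : filling n) : nat := #|[set p | S p == Some false]|.

Local Open Scope ring_scope.

Definition wt (R : realFieldType) (alpha beta : R) n (S : filling n) : R :=
  alpha ^+ N_alpha S * beta ^+ N_beta S.

Definition prob (R : realFieldType) n (alpha beta : R) (E : pred (filling n)) : R :=
  (\sum_(S in stairs n | E S) wt alpha beta S) /
  (\sum_(S in stairs n) wt alpha beta S).

(* x_j : box (n-j, j) (1-based) is non-empty, i.e. 0-based (n-j-1, j-1). *)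
Definition x_ev n (j : nat) : pred (filling n) := fun S =>
  [exists p : box n,
     [&& (p.1 == n - j - 1 :> nat)%N, (p.2 == j - 1 :> nat)%N & S p != None]].

Definition x_evs n (js : seq nat) : pred (filling n) := fun S =>
  all (fun j => x_ev j S) js.

From mathcomp Require Import all_boot all_order all_algebra zify ring lra.
Set Implicit Arguments. Unset Strict Implicit. Unset Printing Implicit Defensive.
Import Order.TTheory GRing.Theory Num.Theory.
Local Open Scope ring_scope.

(* Build the tableau row by row, from the bottom row up.  Given the rows k, ...,
   n-1, call a column free if it meets row k inside the staircase and holds no α;
   the boxes of row k-1 that may be filled lie in free columns.  In a row, the
   diagonal box holds α or β, a β is the leftmost symbol, and every other box in
   a free column holds α or is empty.  Hence, weighting the rows k, ..., n-1 by
   x^(number of free columns), their generating function satisfies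
   G_k(x) = (α + β x) G_(k+1)(α + x): summing over one row, a free column stays
   free, with factor x, exactly when it receives no α.  With G_n = 1 this gives
   G_k(x) = Π_(j < n-k) (α + j α β + β x).  If the box of row k just above the
   diagonal box of row k+1 must be filled, that diagonal box cannot hold α, so
   row k+1 is a lone β and G_k(x) = α β (α + β x) G_(k+2)(α + x).  Since
   α β / (α + j α β + β) = 1 / (a + b + j), the probability is the claimed
   product.  Two such events in consecutive rows are incompatible: the diagonal
   box below one filled box and right of the other can hold neither α nor β. *)

Lemma sum_option_bool (V : nmodType) (F : option bool -> V) :
  \sum_(a : option bool) F a = F None + F (Some true) + F (Some false).
Proof.
rewrite (bigD1 None) // (bigD1 (Some true)) // (bigD1 (Some false)) // big_pred0;
  last by case=> [[]|].
transitivity (F None + (F (Some true) + (F (Some false) + 0))); first by [].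
by rewrite addr0 addrA.
Qed.

Section StaircaseTableaux.
Variable R : realFieldType.
Variables alpha beta : R.
Variable n : nat.
Local Notation tableau := (filling n).
Local Notation tableau_row := {ffun 'I_n -> option bool}.

(** * Tableaux on the bottom rows *)

Definition partial_stair (k : nat) (S : tableau) : bool :=
  [&& [forall p : box n, (S p != None) ==> ((p.1 + p.2 < n)%N && (k <= p.1)%N)],
      [forall p : box n, (S p == Some true) ==>
          [forall q : box n, ((q.2 == p.2) && (q.1 < p.1)%N) ==> (S q == None)]],
      [forall p : box n, (S p == Some false) ==>
          [forall q : box n, ((q.1 == p.1) && (q.2 < p.2)%N) ==> (S q == None)]] &
      [forall p : box n, ((p.1 + p.2 == n.-1)%N && (k <= p.1)%N) ==> (S p != None)]].

Definition supported_from k (S : tableau) :=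
  forall p : box n, S p != None -> (p.1 + p.2 < n)%N /\ (k <= p.1)%N.

Lemma partial_stairP k (S : tableau) : reflect
 [/\ supported_from k S,
     (forall p q : box n, S p = Some true -> q.2 = p.2 -> (q.1 < p.1)%N -> S q = None),
     (forall p q : box n, S p = Some false -> q.1 = p.1 -> (q.2 < p.2)%N -> S q = None) &
     (forall p : box n, (p.1 + p.2)%N = n.-1 -> (k <= p.1)%N -> S p != None)]
  (partial_stair k S).
Proof.
apply: (iffP and4P) => [[/forallP h1 /forallP h2 /forallP h3 /forallP h4]|[h1 h2 h3 h4]];
  split.
- by move=> p hp; have /andP[] := implyP (h1 p) hp.
- move=> p q hp hq hlt; have /forallP h := implyP (h2 p) (introT eqP hp).
  by apply/eqP/(implyP (h q)); rewrite hq eqxx hlt.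
- move=> p q hp hq hlt; have /forallP h := implyP (h3 p) (introT eqP hp).
  by apply/eqP/(implyP (h q)); rewrite hq eqxx hlt.
- by move=> p hp hk; apply: (implyP (h4 p)); rewrite hp eqxx hk.
- by apply/forallP => p; apply/implyP => /h1[-> ->].
- apply/forallP => p; apply/implyP => /eqP hp; apply/forallP => q.
  by apply/implyP => /andP[/eqP hq hlt]; rewrite (h2 p q).
- apply/forallP => p; apply/implyP => /eqP hp; apply/forallP => q.
  by apply/implyP => /andP[/eqP hq hlt]; rewrite (h3 p q).
- by apply/forallP => p; apply/implyP => /andP[/eqP hp hk]; apply: h4.
Qed.

Lemma partial_stair_supported k S : partial_stair k S -> supported_from k S.
Proof. by case/partial_stairP. Qed.

Lemma supported_le k k' S : (k' <= k)%N -> supported_from k S -> supported_from k' S.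
Proof. by move=> hk h p /h[a b]; split => //; apply: leq_trans hk b. Qed.

Lemma supported_above k S (p : box n) : supported_from k S -> (p.1 < k)%N -> S p = None.
Proof.
move=> hS hlt; apply/eqP; apply/negPn/negP => /hS[_ hk].
by move: (leq_ltn_trans hk hlt); rewrite ltnn.
Qed.

Lemma stairs_partial (S : tableau) : (S \in stairs n) = partial_stair 0 S.
Proof.
rewrite inE /is_ab_stair /partial_stair; congr [&& _, _, _ & _].
  apply: eq_forallb => p; rewrite /in_stair leq0n andbT.
  by case: (p.1 + p.2 < n)%N; case: (S p == None).
by apply: eq_forallb => p; rewrite andbT.
Qed.

Definition clear_row (i : 'I_n) (S : tableau) : tableau :=
  [ffun p : box n => if p.1 == i then None else S p].
Definition set_row (i : 'I_n) (S : tableau) (v : tableau_row) : tableau :=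
  [ffun p : box n => if p.1 == i then v p.2 else S p].
Definition row_of (i : 'I_n) (S : tableau) : tableau_row := [ffun c => S (i, c)].

Lemma set_row_same (i : 'I_n) S v c : set_row i S v (i, c) = v c.
Proof. by rewrite ffunE /= eqxx. Qed.

Lemma set_row_other (i : 'I_n) S v (p : box n) : p.1 != i -> set_row i S v p = S p.
Proof. by rewrite ffunE => /negbTE ->. Qed.

Lemma partial_stair_clear (i : 'I_n) (S : tableau) :
  partial_stair i S -> partial_stair i.+1 (clear_row i S).
Proof.
move=> /partial_stairP[h1 h2 h3 h4]; apply/partial_stairP; split.
- move=> p; rewrite ffunE; case: ifP => // /negbT hne /h1[a b]; split => //.
  by rewrite ltn_neqAle b andbT; apply: contra hne => /eqP he; apply/eqP/val_inj.
- move=> p q; rewrite !ffunE; case: ifP => // _ hp hq hlt; case: ifP => // _.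
  exact: h2 hp hq hlt.
- move=> p q; rewrite !ffunE; case: ifP => // _ hp hq hlt; case: ifP => // _.
  exact: h3 hp hq hlt.
- move=> p hd hk; rewrite ffunE; case: ifP => [/eqP he|_]; last by apply: h4 => //; apply: ltnW.
  by move: hk; rewrite he ltnn.
Qed.

Lemma sum_partial_stair_rows (i : 'I_n) (F : tableau -> R) :
  \sum_(S | partial_stair i S) F S =
  \sum_(S | partial_stair i.+1 S)
    \sum_(v : tableau_row | partial_stair i (set_row i S v)) F (set_row i S v).
Proof.
rewrite (partition_big (clear_row i) (partial_stair i.+1)) /=; last exact: partial_stair_clear.
apply: eq_bigr => S gS.
rewrite (reindex_onto (set_row i S) (row_of i)) /=; last first.
  move=> S' /andP[_ /eqP <-]; apply/ffunP => -[a b]; rewrite !ffunE /=.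
  by case: (a =P i) => [->|_]; rewrite ?eqxx.
apply: eq_bigl => v.
have -> : clear_row i (set_row i S v) = S.
  apply/ffunP => p; rewrite !ffunE; case: (p.1 =P i) => [he|//].
  by rewrite (supported_above (partial_stair_supported gS)) // he.
have -> : row_of i (set_row i S v) = v by apply/ffunP => c; rewrite !ffunE eqxx.
by rewrite !eqxx !andbT.
Qed.

(** * Admissible rows *)

Definition alpha_free (S : tableau) (c : 'I_n) := [forall i : 'I_n, S (i, c) != Some true].
Definition free_cols (k : nat) (S : tableau) :=
  [set c : 'I_n | (k + c < n)%N && alpha_free S c].

Definition admissible_row (Fr : {set 'I_n}) (d : 'I_n) (t : nat) (v : tableau_row) :=
  [&& [forall c : 'I_n, (v c != None) ==> (c \in Fr) && (t <= c)%N],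
      [forall c : 'I_n, forall c' : 'I_n,
          ((v c' == Some false) && (c < c')%N) ==> (v c == None)] &
      (t <= d)%N ==> (v d != None)].

Lemma admissible_rowP (Fr : {set 'I_n}) (d : 'I_n) t (v : tableau_row) : reflect
  [/\ (forall c : 'I_n, v c != None -> c \in Fr /\ (t <= c)%N),
      (forall c c' : 'I_n, v c' = Some false -> (c < c')%N -> v c = None) &
      ((t <= d)%N -> v d != None)] (admissible_row Fr d t v).
Proof.
apply: (iffP and3P) => [[/forallP h1 /forallP h2 /implyP h3]|[h1 h2 h3]]; split => //.
- by move=> c /(implyP (h1 c)) /andP.
- move=> c c' hb hlt; apply/eqP; apply: (implyP (forallP (h2 c) c')).
  by rewrite hb eqxx hlt.
- by apply/forallP => c; apply/implyP => /h1[-> ->].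
- apply/forallP => c; apply/forallP => c'; apply/implyP => /andP[/eqP hb hlt].
  by rewrite (h2 c c').
- exact/implyP.
Qed.

Lemma diag_free (i : 'I_n) S : supported_from i.+1 S -> rev_ord i \in free_cols i S.
Proof.
move=> hS; rewrite inE /=; apply/andP; split; first by have := ltn_ord i; lia.
apply/forallP => i'; apply/negP => /eqP h.
have [] := hS (i', rev_ord i); first by rewrite h.
by rewrite /= => h1 h2; have := ltn_ord i; lia.
Qed.

Lemma free_le_diag (i : 'I_n) S c : c \in free_cols i S -> (c <= rev_ord i)%N.
Proof. by rewrite inE /= => /andP[h _]; have := ltn_ord i; lia. Qed.

Lemma admissible_set_row (i : 'I_n) (S : tableau) v : partial_stair i.+1 S ->
  partial_stair i (set_row i S v) -> admissible_row (free_cols i S) (rev_ord i) 0 v.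
Proof.
move=> /partial_stairP[g1 _ _ _] /partial_stairP[h1 h2 h3 h4]; apply/admissible_rowP; split.
- move=> c hc; split => //; rewrite inE.
  have /h1[-> _] /= : set_row i S v (i, c) != None by rewrite set_row_same.
  apply/forallP => i'; apply/negP => /eqP ha.
  have /g1[_ hk] : S (i', c) != None by rewrite ha.
  have hne : i' != i by rewrite neq_ltn /= hk orbT.
  have := h2 (i', c) (i, c); rewrite set_row_same set_row_other // => /(_ ha erefl hk) hv.
  by rewrite hv in hc.
- move=> c c' hb hlt.
  by have := h3 (i, c') (i, c); rewrite !set_row_same => /(_ hb erefl hlt).
- move=> _; have := h4 (i, rev_ord i); rewrite set_row_same; apply => //=.
  by have := ltn_ord i; lia.
Qed.

Lemma set_row_admissible (i : 'I_n) (S : tableau) v : partial_stair i.+1 S ->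
  admissible_row (free_cols i S) (rev_ord i) 0 v -> partial_stair i (set_row i S v).
Proof.
move=> gS /admissible_rowP[r1 r2 r3]; have /partial_stairP[g1 g2 g3 g4] := gS.
apply/partial_stairP; split.
- move=> [a b] /=; case: (a =P i) => [->|/eqP hne].
    by rewrite set_row_same => /r1[]; rewrite inE => /andP[].
  by rewrite set_row_other //= => /(g1 (a, b))[]; split => //; apply: ltnW.
- move=> [a b] [a' b'] /=; case: (a =P i) => [->|/eqP hne].
    move=> _ -> hlt; rewrite set_row_other /=; last by rewrite neq_ltn hlt.
    by rewrite (supported_above (partial_stair_supported gS)) //= (ltn_trans hlt).
  rewrite set_row_other // => ha -> hlt; case: (a' =P i) => [->|/eqP hne'].
    rewrite set_row_same; apply/eqP; apply/negPn/negP => /r1[].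
    by rewrite inE => /andP[_ /forallP /(_ a)]; rewrite ha.
  by rewrite set_row_other //; apply: (g2 (a, b)).
- move=> [a b] [a' b'] /=; case: (a =P i) => [->|/eqP hne].
    by rewrite set_row_same => hb -> hlt; rewrite set_row_same; apply: r2 hb hlt.
  rewrite set_row_other // => hb he hlt; rewrite set_row_other /= he //.
  by apply: (g3 (a, b)) => //=; rewrite he.
- move=> [a b] /= hd hk; case: (a =P i) => [ha|/eqP hne].
    subst a; rewrite set_row_same; suff -> : b = rev_ord i by apply: r3.
    by apply/val_inj => /=; move: hd (ltn_ord i); lia.
  rewrite set_row_other //; apply: (g4 (a, b)) => //=.
  by rewrite ltn_neqAle hk andbT eq_sym.
Qed.

Lemma partial_stair_set_row (i : 'I_n) (S : tableau) v : partial_stair i.+1 S ->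
  partial_stair i (set_row i S v) = admissible_row (free_cols i S) (rev_ord i) 0 v.
Proof.
by move=> gS; apply/idP/idP; [apply: admissible_set_row | apply: set_row_admissible].
Qed.

Definition upd_row (v : tableau_row) (c : 'I_n) (a : option bool) : tableau_row :=
  [ffun c' => if c' == c then a else v c'].

Lemma upd_row_same (v : tableau_row) c a : upd_row v c a c = a.
Proof. by rewrite ffunE eqxx. Qed.

Lemma upd_row_other (v : tableau_row) c a c' : c' != c -> upd_row v c a c' = v c'.
Proof. by rewrite ffunE => /negbTE ->. Qed.

Lemma sum_rows_by_entry (c : 'I_n) (P : pred tableau_row) (F : tableau_row -> R) :
  \sum_(v | P v) F v =
  \sum_(a : option bool)
    \sum_(v : tableau_row | (v c == None) && P (upd_row v c a)) F (upd_row v c a).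
Proof.
rewrite (partition_big (fun v : tableau_row => v c) xpredT) //; apply: eq_bigr => a _.
rewrite (reindex_onto (fun v => upd_row v c a) (fun v => upd_row v c None)); last first.
  move=> v /andP[_ /eqP <-]; apply/ffunP => c'; rewrite !ffunE.
  by case: (c' =P c) => [->|].
apply: eq_bigl => v; rewrite upd_row_same eqxx andbT andbC; congr andb.
apply/eqP/eqP => [<-|h]; first by rewrite upd_row_same.
by apply/ffunP => c'; rewrite !ffunE; case: (c' =P c) => [->|].
Qed.

Definition beta_free (v : tableau_row) := [forall c, v c != Some false].

Lemma beta_free_upd (v : tableau_row) c a :
  v c = None -> beta_free (upd_row v c a) = (a != Some false) && beta_free v.
Proof.
move=> hc; apply/forallP/andP => [h|[ha /forallP h] c'].
  split; first by have := h c; rewrite upd_row_same.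
  apply/forallP => c'; have := h c'; rewrite ffunE.
  by case: (c' =P c) => [->|]; rewrite ?hc.
by rewrite ffunE; case: (c' =P c).
Qed.

Section LeftmostColumn.
Variables (Fr : {set 'I_n}) (d c : 'I_n) (t : nat) (v : tableau_row).
Hypothesis ct : (c : nat) = t.

Let col_other c' : c' != c -> (c' : nat) != t.
Proof. by move=> h; rewrite -ct; apply: contra h => /eqP/val_inj ->. Qed.

Lemma admissible_row_none : admissible_row Fr d t.+1 v -> v c = None.
Proof.
move=> /admissible_rowP[h1 _ _]; apply/eqP; apply/negPn/negP => /h1[_].
by rewrite ct ltnn.
Qed.

Lemma admissible_upd_symbol b :
  (v c == None) && admissible_row Fr d t (upd_row v c (Some b)) =
  [&& c \in Fr, admissible_row Fr d t.+1 v & beta_free v].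
Proof.
apply/andP/and3P => [[/eqP vc /admissible_rowP[h1 h2 h3]]|[cF hv /forallP nb]].
  have [cFr _] : c \in Fr /\ (t <= c)%N by apply: h1; rewrite upd_row_same.
  split => //.
  - apply/admissible_rowP; split.
    + move=> c' hc'; have hne : c' != c by apply: contraNneq hc' => ->; rewrite vc.
      have := h1 c'; rewrite upd_row_other // => /(_ hc')[hF hle]; split => //.
      by have := col_other hne; lia.
    + move=> c0 c' hb hlt; case: (c0 =P c) => [->|/eqP hne] //.
      have hne' : c' != c by apply/eqP => e; move: hb; rewrite e vc.
      by have := h2 c0 c'; rewrite !upd_row_other // => /(_ hb hlt).
    + move=> hd; have hne : d != c by apply: contraTneq hd => ->; rewrite ct ltnn.
      by rewrite -(upd_row_other _ (Some b) hne); apply: h3; apply: ltnW.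
  - apply/forallP => c'; apply/negP => /eqP hb.
    have hne' : c' != c by apply/eqP => e; move: hb; rewrite e vc.
    have := h1 c'; rewrite upd_row_other // hb => /(_ isT)[_ hle].
    have hlt : (c < c')%N by have := col_other hne'; lia.
    by have := h2 c c'; rewrite upd_row_other // upd_row_same => /(_ hb hlt).
have vc := admissible_row_none hv; move/admissible_rowP: hv => [h1 h2 h3].
split; first by rewrite vc.
apply/admissible_rowP; split.
- move=> c'; case: (c' =P c) => [->|/eqP hne]; first by rewrite ct.
  by rewrite upd_row_other // => /h1[-> /ltnW].
- move=> c0 c'; case: (c' =P c) => [->|/eqP hne]; last first.
    by rewrite upd_row_other // => hb; have := nb c'; rewrite hb eqxx.
  rewrite upd_row_same => _ hlt; have hne0 : c0 != c by rewrite neq_ltn hlt.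
  rewrite upd_row_other //; apply/eqP; apply/negPn/negP => /h1[_].
  by move=> hle; move: hlt; rewrite ct; lia.
- move=> hd; case: (d =P c) => [->|/eqP hne]; first by rewrite upd_row_same.
  by rewrite upd_row_other //; apply: h3; have := col_other hne; lia.
Qed.

Lemma admissible_upd_empty :
  (v c == None) && admissible_row Fr d t (upd_row v c None) =
  admissible_row Fr d t.+1 v && (c != d).
Proof.
apply/andP/andP => [[/eqP vc /admissible_rowP[h1 h2 h3]]|[hv hne]].
  have hne : c != d.
    by apply/eqP => hcd; have := h3; rewrite -hcd ct leqnn upd_row_same => /(_ isT).
  split => //; apply/admissible_rowP; split.
  - move=> c' hc'; have hne' : c' != c by apply: contraNneq hc' => ->; rewrite vc.
    have := h1 c'; rewrite upd_row_other // => /(_ hc')[hF hle]; split => //.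
    by have := col_other hne'; lia.
  - move=> c0 c' hb hlt; case: (c0 =P c) => [->|/eqP hne0] //.
    have hne' : c' != c by apply/eqP => e; move: hb; rewrite e vc.
    by have := h2 c0 c'; rewrite !upd_row_other // => /(_ hb hlt).
  - move=> hd; have hne' : d != c by rewrite eq_sym.
    by rewrite -(upd_row_other _ None hne'); apply: h3; apply: ltnW.
have vc := admissible_row_none hv; move/admissible_rowP: hv => [h1 h2 h3].
split; first by rewrite vc.
apply/admissible_rowP; split.
- move=> c'; case: (c' =P c) => [->|/eqP hne']; first by rewrite upd_row_same.
  by rewrite upd_row_other // => /h1[-> /ltnW].
- move=> c0 c'; case: (c' =P c) => [->|/eqP hne']; first by rewrite upd_row_same.
  rewrite upd_row_other // => hb hlt.
  case: (c0 =P c) => [->|/eqP hne0]; first by rewrite upd_row_same.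
  by rewrite upd_row_other //; apply: h2 hb hlt.
- move=> hd; have hne' : d != c by rewrite eq_sym.
  by rewrite upd_row_other //; apply: h3; have := col_other hne'; lia.
Qed.

End LeftmostColumn.

Definition row_alphas (v : tableau_row) := #|[set c | v c == Some true]|.
Definition row_betas (v : tableau_row) := #|[set c | v c == Some false]|.
Definition free_after (Fr : {set 'I_n}) t (v : tableau_row) :=
  #|[set c | (c \in Fr) && (t <= c)%N && (v c != Some true)]|.
Definition row_wt (Fr : {set 'I_n}) (x : R) t (v : tableau_row) :=
  alpha ^+ row_alphas v * beta ^+ row_betas v * x ^+ free_after Fr t v.

Lemma card_upd_row (v : tableau_row) c a (Q : pred (option bool)) : v c = None -> ~~ Q None ->
  #|[set c' | Q (upd_row v c a c')]| = (Q a + #|[set c' | Q (v c')]|)%N.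
Proof.
move=> hc hQ; rewrite [LHS](cardsD1 c) [X in _ = _ + X](cardsD1 c).
rewrite !inE upd_row_same hc (negbTE hQ) add0n.
congr addn; apply: eq_card => c'; rewrite !inE ffunE.
by case: (c' =P c) => [->|/eqP ne]; rewrite ?eqxx.
Qed.

Lemma free_after_upd (Fr : {set 'I_n}) t (c : 'I_n) (v : tableau_row) a : (c : nat) = t ->
  free_after Fr t (upd_row v c a) = (((c \in Fr) && (a != Some true)) + free_after Fr t.+1 v)%N.
Proof.
move=> ct; rewrite /free_after [LHS](cardsD1 c) !inE upd_row_same ct leqnn andbT.
congr addn; apply: eq_card => c'; rewrite !inE ffunE.
case: (c' =P c) => [->|/eqP ne]; first by rewrite ct ltnn !andbF.
have h : (c' : nat) != t by rewrite -ct; apply: contra ne => /eqP/val_inj ->.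
by rewrite /= (_ : (t <= c')%N = (t < c')%N) // ltn_neqAle eq_sym h.
Qed.

Definition entry_wt (Fr : {set 'I_n}) (x : R) (c : 'I_n) (a : option bool) : R :=
  match a with
  | None => if c \in Fr then x else 1
  | Some true => alpha
  | Some false => beta * (if c \in Fr then x else 1)
  end.

Lemma row_wt_upd (Fr : {set 'I_n}) x t (c : 'I_n) (v : tableau_row) a :
  (c : nat) = t -> v c = None ->
  row_wt Fr x t (upd_row v c a) = entry_wt Fr x c a * row_wt Fr x t.+1 v.
Proof.
move=> ct vc; rewrite /row_wt /row_alphas /row_betas.
rewrite (card_upd_row a (Q := fun o => o == Some true)) //.
rewrite (card_upd_row a (Q := fun o => o == Some false)) // free_after_upd //.
by case: a => [[]|] /=; case: (c \in Fr) => /=; rewrite ?add0n ?exprD ?expr1 ?expr0; ring.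
Qed.

(* With [bok = false] no β may occur: this is the situation once some
   symbol has been placed to the left of column [t]. *)
Definition tail_sum (Fr : {set 'I_n}) (d : 'I_n) (x : R) t (bok : bool) :=
  \sum_(v : tableau_row | admissible_row Fr d t v && (bok || beta_free v)) row_wt Fr x t v.

Lemma tail_sum_entry (Fr : {set 'I_n}) (d : 'I_n) x t (c : 'I_n) bok a : (c : nat) = t ->
  \sum_(v : tableau_row | (v c == None) && (admissible_row Fr d t (upd_row v c a) &&
                               (bok || beta_free (upd_row v c a))))
     row_wt Fr x t (upd_row v c a)
  = entry_wt Fr x c a *
    \sum_(v : tableau_row |
             (if a is Some _ then [&& c \in Fr, admissible_row Fr d t.+1 v & beta_free v]
              else admissible_row Fr d t.+1 v && (c != d)) &&
             (bok || ((a != Some false) && beta_free v)))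
       row_wt Fr x t.+1 v.
Proof.
move=> ct; rewrite big_distrr /=; apply: eq_big => v.
- rewrite andbA.
  have -> : (v c == None) && admissible_row Fr d t (upd_row v c a) =
            if a is Some _ then [&& c \in Fr, admissible_row Fr d t.+1 v & beta_free v]
            else admissible_row Fr d t.+1 v && (c != d).
    by case: a => [b|]; [apply: admissible_upd_symbol | apply: admissible_upd_empty].
  case h: (if a is Some _ then _ else _) => //=.
  have vc : v c = None.
    by move: h; case: a => [b /and3P[_ hv _]|/andP[hv _]]; apply: admissible_row_none hv.
  by rewrite beta_free_upd.
- by move=> /andP[/eqP vc _]; rewrite row_wt_upd.
Qed.

Lemma tail_sum_step (Fr : {set 'I_n}) (d : 'I_n) x t (c : 'I_n) bok : (c : nat) = t ->
  tail_sum Fr d x t bok =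
    (if c != d then (if c \in Fr then x else 1) * tail_sum Fr d x t.+1 bok else 0)
  + (if c \in Fr then (alpha + (if bok then beta * x else 0)) * tail_sum Fr d x t.+1 false
     else 0).
Proof.
move=> ct; rewrite /tail_sum (sum_rows_by_entry c) sum_option_bool.
rewrite !tail_sum_entry //= -addrA; congr (_ + _).
  case: (c != d); last by rewrite big_pred0 ?mulr0 // => v; rewrite andbF.
  by congr (_ * _); apply: eq_bigl => v; rewrite andbT.
case cF: (c \in Fr); last by rewrite !big_pred0 ?mulr0 ?addr0 // => v; rewrite andbF.
rewrite mulrDl; congr (_ + _).
  congr (_ * _); apply: eq_bigl => v.
  by case: (admissible_row _ _ _ _); case: (beta_free v); case: bok.
case: bok; last by rewrite mul0r big_pred0 ?mulr0 // => v; rewrite !andbF.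
by congr (_ * _); apply: eq_bigl => v; case: (admissible_row _ _ _ _); case: (beta_free v).
Qed.

Definition free_from (Fr : {set 'I_n}) t := #|[set c in Fr | (t <= c)%N]|.

Lemma free_from_step (Fr : {set 'I_n}) t (c : 'I_n) : (c : nat) = t ->
  free_from Fr t = ((c \in Fr) + free_from Fr t.+1)%N.
Proof.
move=> ct; rewrite /free_from (cardsD1 c) !inE ct leqnn andbT; congr addn.
apply: eq_card => c'; rewrite !inE.
case: (c' =P c) => [->|/eqP ne]; first by rewrite ct ltnn andbF.
have h : (c' : nat) != t by rewrite -ct; apply: contra ne => /eqP/val_inj ->.
by rewrite /= (_ : (t <= c')%N = (t < c')%N) // ltn_neqAle eq_sym h.
Qed.

Lemma tail_sum_end (Fr : {set 'I_n}) (d : 'I_n) x bok : tail_sum Fr d x n bok = 1.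
Proof.
rewrite /tail_sum (big_pred1 [ffun => None]); last first.
  move=> v; apply/idP/eqP => [/andP[/admissible_rowP[h1 _ _] _]|->].
    apply/ffunP => c; rewrite ffunE; apply/eqP; apply/negPn/negP => /h1[_].
    by rewrite leqNgt ltn_ord.
  rewrite orbC; apply/andP; split; last by apply/orP; left; apply/forallP => c; rewrite ffunE.
  by apply/admissible_rowP; split => [c|c c'|]; rewrite ?ffunE // leqNgt ltn_ord.
rewrite /row_wt /row_alphas /row_betas /free_after !eq_card0 ?expr0 ?mulr1 // => c;
  by rewrite !inE ffunE // leqNgt ltn_ord andbF.
Qed.

Lemma tail_sum_closed (Fr : {set 'I_n}) (d : 'I_n) x :
  d \in Fr -> (forall c, c \in Fr -> (c <= d)%N) ->
  forall s t, (t + s)%N = n ->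
  if (d < t)%N then tail_sum Fr d x t true = 1 /\ tail_sum Fr d x t false = 1
  else tail_sum Fr d x t true = (alpha + beta * x) * (alpha + x) ^+ (free_from Fr t).-1 /\
       tail_sum Fr d x t false = alpha * (alpha + x) ^+ (free_from Fr t).-1.
Proof.
move=> dF hFd; elim=> [|s IH] t.
  by rewrite addn0 => ->; rewrite ltn_ord !tail_sum_end.
move=> hts; have ht : (t < n)%N by rewrite -hts addnS ltnS leq_addr.
have := IH t.+1; rewrite addSnnS => /(_ hts) IH1.
pose c := Ordinal ht; have ct : (c : nat) = t by []; clearbody c.
rewrite !(tail_sum_step _ _ _ _ ct) (free_from_step _ ct).
case: (ltngtP d t) => hdt.
- have cF : c \in Fr = false by apply/negP => /hFd; rewrite ct leqNgt hdt.
  have cd : c != d by apply/eqP => e; move: hdt; rewrite -e ct ltnn.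
  rewrite ltnS ltnW // in IH1; case: IH1 => -> ->.
  by rewrite cF cd !mulr1 !addr0.
- have cd : c != d by apply/eqP => e; move: hdt; rewrite -e ct ltnn.
  rewrite ltnS leqNgt hdt /= in IH1; case: IH1 => -> ->.
  have : (0 < free_from Fr t.+1)%N.
    by rewrite /free_from card_gt0; apply/set0Pn; exists d; rewrite !inE dF.
  case: (free_from Fr t.+1) => // k _.
  rewrite cd; case: (c \in Fr) => /=; rewrite ?mul1r ?addr0 ?add0n //= exprS; split; ring.
- have cd : c = d by apply/val_inj => /=; rewrite ct hdt.
  subst d; rewrite ltnS ct leqnn in IH1; case: IH1 => -> ->.
  rewrite eqxx dF.
  have -> : free_from Fr t.+1 = 0%N.
    apply: eq_card0 => c'; rewrite !inE; apply/negP => /andP[/hFd].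
    by rewrite ct => h1 h2; have := leq_trans h2 h1; rewrite ltnn.
  by rewrite /= !add0r !mulr1 addr0.
Qed.

Lemma sum_admissible_rows (Fr : {set 'I_n}) (d : 'I_n) x :
  d \in Fr -> (forall c, c \in Fr -> (c <= d)%N) ->
  \sum_(v : tableau_row | admissible_row Fr d 0 v) row_wt Fr x 0 v =
  (alpha + beta * x) * (alpha + x) ^+ #|Fr|.-1.
Proof.
move=> dF hFd; have [h _] := tail_sum_closed x dF hFd (add0n n).
have -> : #|Fr| = free_from Fr 0 by apply: eq_card => c; rewrite !inE andbT.
by rewrite -h; apply: eq_bigl => v; rewrite orTb andbT.
Qed.

Lemma sum_admissible_rows_filled (Fr : {set 'I_n}) (d e : 'I_n) x :
  d \in Fr -> (forall c, c \in Fr -> (c <= d)%N) -> e != d ->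
  \sum_(v : tableau_row | admissible_row Fr d 0 v && (v e != None)) row_wt Fr x 0 v =
  if e \in Fr then alpha * (alpha + beta * x) * (alpha + x) ^+ #|Fr|.-2 else 0.
Proof.
move=> dF hFd ne; case eF: (e \in Fr); last first.
  rewrite big_pred0 // => v; apply/negP => /andP[/admissible_rowP[h _ _] /h[]].
  by rewrite eF.
have dF' : d \in Fr :\ e by rewrite !inE eq_sym ne.
have hFd' c : c \in Fr :\ e -> (c <= d)%N by rewrite !inE => /andP[_ /hFd].
have h := sum_admissible_rows x dF hFd.
rewrite (bigID (fun v : tableau_row => v e != None)) /= in h.
have empty_e :
    \sum_(v : tableau_row | admissible_row Fr d 0 v && ~~ (v e != None)) row_wt Fr x 0 v =
    x * ((alpha + beta * x) * (alpha + x) ^+ #|Fr :\ e|.-1).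
  rewrite -(sum_admissible_rows x dF' hFd') big_distrr /=; apply: eq_big => v.
    rewrite negbK.
    apply/andP/admissible_rowP => [[/admissible_rowP[h1 h2 h3] /eqP ve]|[h1 h2 h3]].
      split => // c hc; have [cF _] := h1 c hc; split => //; rewrite !inE cF andbT.
      by apply: contraNneq hc => ->; rewrite ve.
    split; last by apply/negPn/negP => /h1[]; rewrite !inE eqxx.
    by apply/admissible_rowP; split => // c /h1[]; rewrite !inE => /andP[_ ->].
  move=> /andP[_]; rewrite negbK => /eqP ve.
  rewrite /row_wt /free_after (cardsD1 e) !inE eF ve /= exprS mulrCA.
  congr (_ * (_ * _ ^+ _)).
  by apply: eq_card => c; rewrite !inE; case: (c =P e) => [->|]; rewrite ?ve.
rewrite empty_e in h; move: h.
rewrite [#|Fr|](cardsD1 e) eF add1n /=.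
have : (0 < #|Fr :\ e|)%N by apply/card_gt0P; exists d.
case: #|Fr :\ e| => // k _ /= h.
rewrite -[LHS](addrK (x * ((alpha + beta * x) * (alpha + x) ^+ k))) h exprS; ring.
Qed.

(** * The generating functions of the bottom rows *)

Lemma card_free_cols_succ k S : (k < n)%N -> supported_from k.+1 S ->
  #|free_cols k S| = (#|free_cols k.+1 S|).+1.
Proof.
move=> hk hS; pose i := Ordinal hk.
rewrite (cardsD1 (rev_ord i)) (diag_free (i := i)) // add1n; congr (_.+1).
apply: eq_card => c; rewrite !inE.
case: (c =P rev_ord i) => [->|/eqP ne] /=; first by rewrite ltnNge /=; lia.
have : (c : nat) != (n - k.+1)%N by apply: contra ne => /eqP h; apply/eqP/val_inj.
by move=> h; congr andb; apply/idP/idP; lia.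
Qed.

Lemma alpha_free_set_row (i : 'I_n) S v c : supported_from i.+1 S ->
  alpha_free (set_row i S v) c = alpha_free S c && (v c != Some true).
Proof.
move=> hS; apply/forallP/andP => [h|[/forallP h hv] i'].
  split; last by have := h i; rewrite set_row_same.
  apply/forallP => i'; case: (i' =P i) => [->|/eqP ne].
    by rewrite (supported_above hS) //= ltnSn.
  by have := h i'; rewrite set_row_other.
by case: (i' =P i) => [->|/eqP ne]; [rewrite set_row_same | rewrite set_row_other].
Qed.

Lemma card_set_row (i : 'I_n) S v (Q : pred (option bool)) : supported_from i.+1 S ->
  ~~ Q None ->
  #|[set p | Q (set_row i S v p)]| = (#|[set p | Q (S p)]| + #|[set c | Q (v c)]|)%N.
Proof.
move=> hS hQ.
have inj : injective (fun c : 'I_n => (i, c)) by move=> c1 c2 [].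
have hSi c : S (i, c) = None by rewrite (supported_above hS) //= ltnSn.
have -> : [set p | Q (set_row i S v p)] =
          [set p | Q (S p)] :|: ((fun c => (i, c)) @: [set c | Q (v c)]).
  apply/setP => -[a b]; rewrite !inE ffunE /=; case: (a =P i) => [->|/eqP ne].
    by rewrite mem_imset // hSi (negbTE hQ) inE.
  suff -> : ((a, b) \in [set (i, c) | c in [set c | Q (v c)]]) = false by rewrite orbF.
  by apply/negP => /imsetP[c _ [e _]]; rewrite e eqxx in ne.
rewrite cardsU card_imset // (_ : _ :&: _ = set0) ?cards0 ?subn0 //.
apply/setP => -[a b]; rewrite !inE; apply/negP => /andP[h /imsetP[c _ [e1 e2]]].
by move: h; rewrite e1 hSi (negbTE hQ).
Qed.

Lemma wt_set_row (i : 'I_n) S v : supported_from i.+1 S ->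
  wt alpha beta (set_row i S v) = wt alpha beta S * (alpha ^+ row_alphas v * beta ^+ row_betas v).
Proof.
move=> hS; rewrite /wt /N_alpha /N_beta /row_alphas /row_betas.
rewrite (card_set_row v (Q := fun o => o == Some true)) //.
by rewrite (card_set_row v (Q := fun o => o == Some false)) // !exprD; ring.
Qed.

Lemma card_free_cols_set_row (i : 'I_n) S v : supported_from i.+1 S ->
  #|free_cols i (set_row i S v)| = free_after (free_cols i S) 0 v.
Proof.
move=> hS; apply: eq_card => c.
by rewrite !inE alpha_free_set_row // leq0n andbT andbA.
Qed.

(* [gen_sum k E x] is G_k(x) restricted to the tableaux satisfying [E]. *)
Definition gen_sum k (E : pred tableau) (x : R) :=
  \sum_(S | partial_stair k S && E S) wt alpha beta S * x ^+ #|free_cols k S|.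

Lemma eq_gen_sum k E E' x : E =1 E' -> gen_sum k E x = gen_sum k E' x.
Proof. by move=> h; apply: eq_bigl => S; rewrite h. Qed.

Lemma gen_sum_empty x : gen_sum n xpredT x = 1.
Proof.
rewrite /gen_sum (big_pred1 [ffun => None]); last first.
  move=> S; rewrite andbT; apply/idP/eqP => [/partial_stairP[h1 _ _ _]|->].
    apply/ffunP => p; rewrite ffunE; apply/eqP; apply/negPn/negP => /h1[_].
    by rewrite leqNgt ltn_ord.
  apply/partial_stairP; split => [p|p q|p q|p]; rewrite ?ffunE //.
  by move=> _; rewrite leqNgt ltn_ord.
rewrite /wt /N_alpha /N_beta !eq_card0 ?expr0 ?mulr1 // => p; rewrite !inE ?ffunE //.
by rewrite ltnNge leq_addr.
Qed.

Lemma sum_set_row_free (i : 'I_n) (S : tableau) (P : pred tableau_row) x :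
  partial_stair i.+1 S ->
  \sum_(v : tableau_row | partial_stair i (set_row i S v) && P v)
     wt alpha beta (set_row i S v) * x ^+ #|free_cols i (set_row i S v)| =
  wt alpha beta S * \sum_(v : tableau_row | admissible_row (free_cols i S) (rev_ord i) 0 v && P v)
                      row_wt (free_cols i S) x 0 v.
Proof.
move=> gS; have hS := partial_stair_supported gS; rewrite big_distrr /=.
apply: eq_big => [v|v _]; first by rewrite partial_stair_set_row.
by rewrite wt_set_row // card_free_cols_set_row // -mulrA.
Qed.

Lemma gen_sum_step (i : 'I_n) E x : (forall S v, E (set_row i S v) = E S) ->
  gen_sum i E x = (alpha + beta * x) * gen_sum i.+1 E (alpha + x).
Proof.
move=> hE; rewrite /gen_sum big_mkcondr sum_partial_stair_rows [in RHS]big_mkcondr.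
rewrite big_distrr /=; apply: eq_bigr => S gS; have hS := partial_stair_supported gS.
rewrite -big_mkcondr (eq_bigl (fun v => partial_stair i (set_row i S v) && E S));
  last by move=> v; rewrite hE.
case: (E S); last by rewrite big_pred0 ?mulr0 // => v; rewrite andbF.
rewrite sum_set_row_free // (eq_bigl (admissible_row (free_cols i S) (rev_ord i) 0));
  last by move=> v; rewrite andbT.
rewrite sum_admissible_rows; [|exact: diag_free|exact: free_le_diag].
by rewrite (card_free_cols_succ (ltn_ord i) hS) /= mulrCA.
Qed.

(** * Conditioning on the boxes next to the diagonal *)

Definition row_event (j : nat) (S : tableau) :=
  [exists p : box n, [&& (p.1 == j :> nat), (p.2 == (n - j.+2)%N :> nat) & S p != None]].

Lemma row_event_set_other (i : 'I_n) j S v :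
  (j != i :> nat) -> row_event j (set_row i S v) = row_event j S.
Proof.
move=> ne; apply/existsP/existsP => -[p /and3P[h1 h2 h3]]; exists p; rewrite h1 h2 /=.
  by rewrite set_row_other // in h3; apply: contra ne => /eqP e; rewrite -(eqP h1) e.
by rewrite set_row_other //; apply: contra ne => /eqP e; rewrite -(eqP h1) e.
Qed.

Lemma row_event_set_row (i e : 'I_n) S v :
  (e : nat) = (n - i.+2)%N -> row_event i (set_row i S v) = (v e != None).
Proof.
move=> he; apply/existsP/idP => [[[a b] /and3P[h1 h2 h3]]|h].
  have ea : a = i by apply/val_inj/eqP.
  have eb : b = e by apply/val_inj; rewrite /= (eqP h2) he.
  by move: h3; rewrite ea eb set_row_same.
by exists (i, e); rewrite /= eqxx he eqxx set_row_same.
Qed.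

Definition beta_row (e : 'I_n) : tableau_row := [ffun c => if c == e then Some false else None].

Section LoneBeta.
Variables (i : nat) (j : 'I_n) (S : tableau).
Hypotheses (ij : (j : nat) = i.+1) (hS : supported_from j.+1 S).
Let e := rev_ord j.

Lemma admissible_beta_row : admissible_row (free_cols j S) e 0 (beta_row e).
Proof.
apply/admissible_rowP; split.
- by move=> c; rewrite ffunE; case: (c =P e) => [->_|//]; split => //; apply: diag_free.
- move=> c c'; rewrite !ffunE; case: (c' =P e) => [-> _ hlt|//].
  by case: (c =P e) => [ce|//]; move: hlt; rewrite ce ltnn.
- by rewrite ffunE eqxx.
Qed.

Lemma free_above_diag_beta_row v : admissible_row (free_cols j S) e 0 v ->
  (e \in free_cols i (set_row j S v)) = (v == beta_row e).
Proof.
move=> /admissible_rowP[h1 h2 h3]; rewrite inE alpha_free_set_row //=.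
have -> : (i + e < n)%N by rewrite /= ij; have := ltn_ord j; lia.
have := h3 (leq0n _); case ve: (v e) => [[]|] // _ /=.
  by rewrite andbF; apply/esym/negbTE/eqP => hv; move: ve; rewrite hv ffunE eqxx.
rewrite andbT; apply/idP/eqP => [_|_].
  apply/ffunP => c; rewrite ffunE; case: (c =P e) => [->//|/eqP ce].
  case: (ltngtP c e) => hce; first exact: h2 ve hce.
    apply/eqP; apply/negPn/negP => /h1[/free_le_diag].
    by rewrite leqNgt hce.
  by move: ce; rewrite (_ : c = e) ?eqxx //; apply/val_inj.
by have := diag_free hS; rewrite inE => /andP[].
Qed.

Lemma card_free_cols_beta_row :
  #|free_cols i (set_row j S (beta_row e))| = (#|free_cols j.+1 S|).+2.
Proof.
have -> : #|free_cols i (set_row j S (beta_row e))| = #|free_cols i S|.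
  by apply: eq_card => c; rewrite !inE alpha_free_set_row // ffunE; case: (c =P e); rewrite ?andbT.
rewrite (@card_free_cols_succ i S) -?ij ?(card_free_cols_succ (ltn_ord j) hS) //.
- by have := ltn_ord j; lia.
- by apply: supported_le hS; lia.
Qed.

Lemma wt_beta_row : wt alpha beta (set_row j S (beta_row e)) = wt alpha beta S * beta.
Proof.
rewrite wt_set_row //.
have -> : row_alphas (beta_row e) = 0%N.
  by apply: eq_card0 => c; rewrite !inE ffunE; case: (c =P e).
have -> : row_betas (beta_row e) = 1%N.
  by rewrite -(cards1 e); apply: eq_card => c; rewrite !inE ffunE; case: (c =P e).
by rewrite expr0 expr1 mul1r.
Qed.

End LoneBeta.

Lemma sum_set_row_event (i e : 'I_n) (S : tableau) x : partial_stair i.+1 S ->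
  e != rev_ord i ->
  \sum_(v : tableau_row | partial_stair i (set_row i S v) && (v e != None))
     wt alpha beta (set_row i S v) * x ^+ #|free_cols i (set_row i S v)| =
  wt alpha beta S * (if e \in free_cols i S
                     then alpha * (alpha + beta * x) * (alpha + x) ^+ #|free_cols i S|.-2
                     else 0).
Proof.
move=> gS ne; rewrite sum_set_row_free // sum_admissible_rows_filled //.
  exact: diag_free (partial_stair_supported gS).
exact: free_le_diag.
Qed.

Lemma gen_sum_event_step (i : 'I_n) (hi : (i.+1 < n)%N) E x :
  (forall S v, E (set_row i S v) = E S) ->
  (forall S v, E (set_row (Ordinal hi) S v) = E S) ->
  gen_sum i (fun S => row_event i S && E S) x =
  alpha * beta * (alpha + beta * x) * gen_sum i.+2 E (alpha + x).
Proof.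
move=> hE hE1; pose j := Ordinal hi.
have ne : rev_ord j != rev_ord i by apply/eqP => /(congr1 val) /=; lia.
pose F S := if rev_ord j \in free_cols i S
            then alpha * (alpha + beta * x) * (alpha + x) ^+ #|free_cols i S|.-2 else 0.
rewrite /gen_sum big_mkcondr sum_partial_stair_rows.
rewrite (eq_bigr (fun S => if E S then wt alpha beta S * F S else 0)); last first.
  move=> S gS; rewrite -big_mkcondr.
  rewrite (eq_bigl (fun v => partial_stair i (set_row i S v) && (E S && (v (rev_ord j) != None))));
    last by move=> v; rewrite hE (@row_event_set_row _ (rev_ord j)) // (andbC (E S)).
  case: (E S); last by rewrite big_pred0 // => v; rewrite andbF.
  exact: sum_set_row_event.
rewrite (sum_partial_stair_rows j) [in RHS]big_mkcondr big_distrr /=.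
apply: eq_bigr => S gS; have hS := partial_stair_supported gS.
rewrite (eq_bigl (admissible_row (free_cols j S) (rev_ord j) 0)); last first.
  by move=> v; rewrite (@partial_stair_set_row j).
rewrite (eq_bigr (fun v => if E S then wt alpha beta (set_row j S v) * F (set_row j S v) else 0));
  last by move=> v _; rewrite hE1.
case: (E S); last by rewrite big1 ?mulr0.
rewrite (bigD1 (beta_row (rev_ord j))) ?admissible_beta_row //= big1 ?addr0; last first.
  by move=> v /andP[hv /negbTE hb]; rewrite /F (free_above_diag_beta_row (i := i)) // hb mulr0.
rewrite /F (free_above_diag_beta_row (i := i)) ?admissible_beta_row // eqxx.
by rewrite (card_free_cols_beta_row (i := i)) // wt_beta_row //=; ring.
Qed.

(** * Solving the recursion *)

Definition spaced k (rs : seq nat) :=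
  forall j, j \in rs -> [&& (k <= j)%N, (j.+2 <= n)%N & j.+1 \notin rs].

Lemma spaced_nil k (rs : seq nat) : (n < k.+2)%N -> spaced k rs -> rs = [::].
Proof.
case: rs => // j rs hk /(_ j); rewrite inE eqxx => /(_ isT) /and3P[h1 h2 _]; lia.
Qed.

Lemma spaced_succ k (rs : seq nat) : k \notin rs -> spaced k rs -> spaced k.+1 rs.
Proof.
move=> krs hrs j jrs; have /and3P[h1 -> ->] := hrs j jrs; rewrite !andbT.
by rewrite ltn_neqAle h1 andbT; apply: contraNneq krs => ->.
Qed.

Lemma spaced_rem k (rs : seq nat) : uniq rs -> k \in rs -> spaced k rs -> spaced k.+2 (rem k rs).
Proof.
move=> urs krs hrs j; rewrite (mem_rem_uniq _ urs) inE => /andP[jk jrs].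
have /and3P[h1 -> h3] := hrs j jrs; have /and3P[_ _ hk1] := hrs k krs.
have jk1 : j != k.+1 by apply: contraNneq hk1 => <-.
rewrite andbC; apply/andP; split; first by apply: contra h3 => /mem_rem.
by move: jk jk1 => /eqP jk /eqP jk1; lia.
Qed.

Lemma spaced_size k (rs : seq nat) : uniq rs -> spaced k rs -> (size rs <= n - k - 1)%N.
Proof.
move=> urs hrs; rewrite -(size_iota k (n - k - 1)); apply: uniq_leq_size => // j.
by move/hrs => /and3P[h1 h2 _]; rewrite mem_iota; apply/andP; split => //; lia.
Qed.

Lemma all_row_event_set_row k (rs : seq nat) (i : 'I_n) S v : spaced k rs -> (i < k)%N ->
  all (row_event^~ (set_row i S v)) rs = all (row_event^~ S) rs.
Proof.
move=> hrs hik; apply: eq_in_all => j /hrs /and3P[h1 _ _].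
by apply: row_event_set_other; rewrite neq_ltn (leq_trans hik h1) orbT.
Qed.

Definition stair_prod (x : R) m := \prod_(j < m) (alpha + j%:R * alpha * beta + beta * x).

Lemma stair_prodS x m : stair_prod x m.+1 = (alpha + beta * x) * stair_prod (alpha + x) m.
Proof.
rewrite /stair_prod big_ord_recl /= !mul0r addr0; congr (_ * _); apply: eq_bigr => j _.
by rewrite /bump /= add1n -addn1 natrD; ring.
Qed.

Lemma gen_sum_events k (rs : seq nat) x : (k <= n)%N -> uniq rs -> spaced k rs ->
  gen_sum k (fun S => all (row_event^~ S) rs) x =
  (alpha * beta) ^+ size rs * stair_prod x (n - k - size rs).
Proof.
have [N] := ubnP (n - k); elim: N k rs x => // N IH k rs x hN hk urs hrs.
have [ekn|hkn] : k = n \/ (k < n)%N by lia.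
  have -> : rs = [::] by apply: spaced_nil hrs; lia.
  by rewrite ekn gen_sum_empty /stair_prod subnn big_ord0 mulr1.
pose i := Ordinal hkn.
case krs: (k \in rs).
- have /and3P[_ hk2 _] := hrs k krs; have hrs' := spaced_rem urs krs hrs.
  have urs' : uniq (rem k rs) by apply: rem_uniq.
  rewrite (@eq_gen_sum _ _ (fun S => row_event i S && all (row_event^~ S) (rem k rs)));
    last by move=> S; rewrite (perm_all _ (perm_to_rem krs)).
  rewrite (@gen_sum_event_step i hk2) => [|S v|S v];
    try by apply: all_row_event_set_row hrs' _ => /=; lia.
  rewrite (IH k.+2) //; try lia.
  have hsz : size rs = (size (rem k rs)).+1 by rewrite size_rem // prednK //; case: (rs) krs.
  have := spaced_size urs' hrs'; rewrite hsz; move: (size (rem k rs)) => s hs.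
  rewrite (_ : (n - k - s.+1 = (n - k.+2 - s).+1)%N); last by lia.
  by rewrite stair_prodS exprS; ring.
- have hrs1 := spaced_succ (negbT krs) hrs.
  rewrite (@gen_sum_step i) => [|S v]; last by apply: all_row_event_set_row hrs1 _ => /=.
  rewrite (IH k.+1) //; try lia.
  have hb := spaced_size urs hrs1.
  rewrite (_ : (n - k - size rs = (n - k.+1 - size rs).+1)%N); last by lia.
  by rewrite stair_prodS; ring.
Qed.

Lemma stair_prod_ratio (r : nat) : (r <= n)%N -> 0 < alpha -> 0 < beta ->
  (alpha * beta) ^+ r * stair_prod 1 (n - r) / stair_prod 1 n =
  \prod_(1 <= k < r.+1) (n%:R + alpha^-1 + beta^-1 - r%:R + k%:R - 1)^-1.
Proof.
move=> hr ha hb; rewrite /stair_prod.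
pose f (j : nat) := alpha + j%:R * alpha * beta + beta * 1.
have fpos j : 0 < f j.
  by rewrite /f mulr1 -mulrA; have := ler0n R j; have := mulr_gt0 ha hb; nra.
rewrite -!(big_mkord xpredT f) (big_cat_nat (n := n - r) (m := 0) (p := n)) ?leq_subr //=.
set P := \prod_(0 <= j < n - r) f j.
have P0 : P != 0 by rewrite /P prodf_seq_neq0; apply/allP => j _; rewrite gt_eqF.
rewrite invfM mulrA -(mulrA _ P) divff // mulr1.
rewrite -{1}(add0n (n - r)%N) big_addn subKn // big_add1 /=.
rewrite (_ : (alpha * beta) ^+ r = \prod_(0 <= i < r) (alpha * beta));
  last by rewrite prodr_const_nat subn0.
rewrite -prodfV -big_split /=; apply: eq_big_nat => i /andP[_ hi].
have e : ((i + (n - r))%N%:R : R) = n%:R - r%:R + i.+1%:R - 1.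
  have h : (i + (n - r) + r + 1 = n + i.+1)%N by lia.
  by have := congr1 (fun q => q%:R : R) h; rewrite /= !natrD; lra.
rewrite /f e; set M := n%:R - r%:R + i.+1%:R - 1.
rewrite (_ : n%:R + alpha^-1 + beta^-1 - r%:R + i.+1%:R - 1 =
             (alpha + M * alpha * beta + beta * 1) / (alpha * beta)); first by rewrite invf_div.
by rewrite /M; field; rewrite !gt_eqF.
Qed.

Lemma prob_gen_sum (E : pred tableau) :
  prob alpha beta E = gen_sum 0 E 1 / gen_sum 0 xpredT 1.
Proof.
rewrite /prob /gen_sum; congr (_ / _); apply: eq_big => [S|S _];
  by rewrite ?stairs_partial ?andbT ?expr1n ?mulr1.
Qed.

Lemma x_ev_row_event (S : tableau) j : (1 <= j <= n - 1)%N ->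
  x_ev j S = row_event (n - j - 1) S.
Proof.
move=> /andP[h1 h2]; rewrite /x_ev /row_event.
by rewrite (_ : (n - (n - j - 1).+2)%N = (j - 1)%N) //; lia.
Qed.

Lemma x_ev_adjacent (S : tableau) j : (1 <= j)%N -> (j.+2 <= n)%N -> partial_stair 0 S ->
  x_ev j S -> x_ev j.+1 S -> False.
Proof.
move=> h1 h2 /partial_stairP[_ g2 g3 g4].
move=> /existsP[p /and3P[/eqP p1 /eqP p2 hp]] /existsP[q /and3P[/eqP q1 /eqP q2 hq]].
have : S (p.1, q.2) != None by apply: g4 => //=; rewrite p1 q2; lia.
case e: (S (p.1, q.2)) => [[]|] // _.
- have hq1 : (q.1 < p.1)%N by rewrite q1 p1; lia.
  by move: hq; rewrite (g2 _ q e erefl hq1).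
- have hp2 : (p.2 < q.2)%N by rewrite q2 p2; lia.
  by move: hp; rewrite (g3 _ p e erefl hp2).
Qed.

Lemma prob_x_evs_adjacent (js : seq nat) j : j \in js -> j.+1 \in js ->
  (1 <= j)%N -> (j.+2 <= n)%N -> prob alpha beta (@x_evs n js) = 0.
Proof.
move=> j1 j2 h1 h2; rewrite /prob big_pred0 ?mul0r // => S.
apply/negP => /andP[hS /allP hx]; rewrite stairs_partial in hS.
exact: x_ev_adjacent h1 h2 hS (hx j j1) (hx _ j2).
Qed.

Lemma prob_row_events (rs : seq nat) : 0 < alpha -> 0 < beta -> uniq rs -> spaced 0 rs ->
  prob alpha beta (fun S => all (row_event^~ S) rs) =
  \prod_(1 <= k < (size rs).+1) (n%:R + alpha^-1 + beta^-1 - (size rs)%:R + k%:R - 1)^-1.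
Proof.
move=> ha hb urs hrs; have hsz := spaced_size urs hrs.
rewrite prob_gen_sum gen_sum_events ?subn0 //.
rewrite (eq_gen_sum _ (E' := fun S => all (row_event^~ S) [::])) //.
by rewrite gen_sum_events ?subn0 //= expr0 mul1r stair_prod_ratio //; lia.
Qed.

Lemma eq_prob (E E' : pred tableau) : E =1 E' -> prob alpha beta E = prob alpha beta E'.
Proof. by move=> h; rewrite /prob; congr (_ / _); apply: eq_bigl => S; rewrite h. Qed.

Lemma x_evs_row_events (js : seq nat) : all (fun j => 1 <= j <= n - 1)%N js ->
  @x_evs n js =1 (fun S => all (row_event^~ S) (map (fun j => n - j - 1)%N js)).
Proof.
by move=> /allP hall S; rewrite /x_evs all_map; apply: eq_in_all => j /hall /x_ev_row_event.
Qed.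

End StaircaseTableaux.

Lemma sorted_gap2_no_succ (js : seq nat) : sorted (fun x y => x <= y - 2)%N js ->
  all (fun j => 1 <= j)%N js -> forall j, j \in js -> j.+1 \notin js.
Proof.
have tr : transitive (fun x y => x <= y - 2)%N by move=> y x z; lia.
elim: js => // a t IH hs /= /andP[ha ht] j.
have /allP hall := order_path_min tr hs.
rewrite !inE => /orP[/eqP ->|jt].
  rewrite negb_or; apply/andP; split; first by rewrite eq_sym neq_ltn ltnSn.
  by apply/negP => /hall; lia.
rewrite negb_or (IH (path_sorted hs) ht j jt) andbT.
by apply/eqP => e; have := hall j jt; lia.
Qed.

Lemma not_sorted_gap2_adjacent (js : seq nat) : sorted ltn js ->
  ~~ sorted (fun x y => x <= y - 2)%N js -> exists2 j, j \in js & j.+1 \in js.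
Proof.
elim: js => // a [|b t] IH //= /andP[hab hp] hns.
case: (leqP a (b - 2)) => h.
  move: hns; rewrite h /= => /(IH hp)[j j1 j2].
  by exists j; rewrite inE ?j1 ?j2 orbT.
by exists a; rewrite !inE ?eqxx // (_ : a.+1 = b) ?eqxx ?orbT //; lia.
Qed.

Lemma spaced_x_ev_rows n (js : seq nat) : sorted ltn js ->
  sorted (fun x y => x <= y - 2)%N js -> all (fun j => 1 <= j <= n - 1)%N js ->
  let rs := map (fun j => n - j - 1)%N js in uniq rs /\ spaced n 0 rs.
Proof.
move=> hs hsep /allP hall rs.
have a1 : all (fun j => 1 <= j)%N js by apply/allP => j /hall /andP[].
split.
  rewrite map_inj_in_uniq ?(sorted_uniq ltn_trans ltnn hs) //.
  by move=> j1 j2 /hall /andP[h1 h2] /hall /andP[h3 h4]; lia.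
move=> j /mapP[j0 j0js ->]; have /andP[h1 h2] := hall j0 j0js.
rewrite leq0n /=; apply/andP; split; first lia.
apply/mapP => -[j1 j1js e]; have /andP[h3 h4] := hall j1 j1js.
have ej : j1.+1 = j0 by lia.
by have := sorted_gap2_no_succ hsep a1 j1js; rewrite ej j0js.
Qed.

Theorem theorem3p8 (R : realFieldType) (n : nat) (alpha beta : R)
  (js : seq nat) :
  (2 <= n)%N -> 0 < alpha -> 0 < beta ->
  (0 < size js)%N ->
  sorted ltn js -> all (fun j => (1 <= j <= n - 1)%N) js ->
  let a := alpha^-1 in let b := beta^-1 in let r := size js in
  (sorted (fun x y => x <= y - 2)%N js ->
     @prob R n alpha beta (@x_evs n js) =
     \prod_(1 <= k < r.+1) (n%:R + a + b - r%:R + k%:R - 1)^-1)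
  /\
  (~~ sorted (fun x y => x <= y - 2)%N js ->
     @prob R n alpha beta (@x_evs n js) = 0).
Proof.
move=> hn ha hb _ hs hall a b r; split => [hsep|hnsep].
  have [urs hrs] := spaced_x_ev_rows hs hsep hall.
  by rewrite (eq_prob _ _ (x_evs_row_events hall)) prob_row_events // size_map.
have [j j1 j2] := not_sorted_gap2_adjacent hs hnsep.
have /andP[h1 _] := allP hall j j1; have /andP[_ h2] := allP hall _ j2.
apply: (prob_x_evs_adjacent alpha beta j1 j2 h1); lia.
Qed.
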